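(* Let $G$ and $H$ be ordered graphs, each with at least $3$ vertices and each with $m$ edges. Suppose $G$ is $3$-connected, $H$ has no isolated vertices, and $M_{1,G}=M_{1,H}$. Then there is a bijection $\sigma$ from the vertices of $G$ to the vertices of $H$ such that for every $k$, if the $k$-th edge of $G$ is $\{i,j\}$ then the $k$-th edge of $H$ is $\{\sigma(i),\sigma(j)\}$.
   Context: An ordered graph is a finite vertex set with an ordered sequence $(E_1,\dots,E_m)$ of distinct unordered pairs of distinct vertices. For a configuration $\mathbf p$ assigning a number $\mathbf p_i\in\mathbb C$ to each vertex, $m_G(\mathbf p)\in\mathbb C^m$ has $k$-th coordinate $(\mathbf p_i-\mathbf p_j)^2$ with $E_k=\{i,j\}$. $M_{1,G}\subseteq\mathbb C^m$ is the Zariski closure of the image of $m_G$ over all such configurations. *)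

From HB Require Import structures.
From mathcomp Require Import all_boot all_order all_algebra.
Set Implicit Arguments. Unset Strict Implicit. Unset Printing Implicit Defensive.
Import Order.TTheory GRing.Theory Num.Theory.
Local Open Scope ring_scope.

Record ordgraph (V : finType) (m : nat) := OrdGraph {
  edge : 'I_m -> V * V;
  edge_loopless : forall k, (edge k).1 != (edge k).2;
  edge_distinct : forall k l : 'I_m, k != l ->
    [set (edge k).1; (edge k).2] != [set (edge l).1; (edge l).2]
}.

Definition edge_set (V : finType) (m : nat) (G : ordgraph V m) (k : 'I_m)
  : {set V} := [set (edge G k).1; (edge G k).2].

Definition adj (V : finType) (m : nat) (G : ordgraph V m) : rel V :=
  fun x y => [exists k : 'I_m, (edge G k == (x, y)) || (edge G k == (y, x))].

Definition adj_minus (V : finType) (m : nat) (G : ordgraph V m) (S : {set V})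
  : rel V := fun x y => [&& adj G x y, x \notin S & y \notin S].

Definition connected_minus (V : finType) (m : nat) (G : ordgraph V m)
  (S : {set V}) : Prop :=
  forall x y : V, x \notin S -> y \notin S -> connect (adj_minus G S) x y.

(* 3-connected: removing any set of fewer than 3 vertices leaves a connected
   graph (the vertex count hypothesis is stated separately). *)
Definition three_connected (V : finType) (m : nat) (G : ordgraph V m) : Prop :=
  forall S : {set V}, (#|S| < 3)%N -> connected_minus G S.

Definition no_isolated (V : finType) (m : nat) (G : ordgraph V m) : Prop :=
  forall v : V, exists k : 'I_m, v \in edge_set G k.

Definition meas (C : numClosedFieldType) (V : finType) (m : nat)
  (G : ordgraph V m) (p : V -> C) : 'I_m -> C :=
  fun k => (p (edge G k).1 - p (edge G k).2) ^+ 2.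

(* polynomials in m variables over C: finite lists of (coefficient, exponent
   vector) terms, and their evaluation *)
Definition mpoly (C : numClosedFieldType) (m : nat) := seq (C * ('I_m -> nat)).

Definition mpeval (C : numClosedFieldType) (m : nat) (P : mpoly C m)
  (x : 'I_m -> C) : C :=
  \sum_(t <- P) t.1 * \prod_(i < m) x i ^+ t.2 i.

Definition zariski_closure (C : numClosedFieldType) (m : nat)
  (S : ('I_m -> C) -> Prop) : ('I_m -> C) -> Prop :=
  fun x => forall P : mpoly C m, (forall y, S y -> mpeval P y = 0) ->
    mpeval P x = 0.

Definition M1 (C : numClosedFieldType) (V : finType) (m : nat)
  (G : ordgraph V m) : ('I_m -> C) -> Prop :=
  zariski_closure (fun y => exists p : V -> C, y = meas G p).

From HB Require Import structures.
From mathcomp Require Import all_boot all_order all_algebra.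
From mathcomp Require Import ring zify.
Set Implicit Arguments. Unset Strict Implicit. Unset Printing Implicit Defensive.
Import Order.TTheory GRing.Theory Num.Theory.

(* The 0/1 configurations show that the indicator vector of every edge cut of G
   lies in M_{1,G}.  Conversely, for a closed walk with edges k_1, ..., k_n, the
   product of (+-t_1 +- ... +-t_n) over all choices of signs, with t_i^2 = x_{k_i},
   is a polynomial in x; it vanishes on the image of m_G, since one choice of signs
   telescopes to 0, but not at the indicator of an edge set met an odd number of
   times by the walk.  Hence the 0/1 points of M_{1,G} are exactly the indicators of
   cuts, and M_{1,G} = M_{1,H} means that G and H have the same edge cuts.
   In the 3-connected graph G every vertex star is a cut, hence a cut of H, and a
   separation argument in G - {u, v} shows it is a vertex star of H; matching stars
   gives the bijection. *)

Section PolynomialFunctions.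
Local Open Scope ring_scope.
Variables (C : numClosedFieldType) (m : nat).

Definition poly_fun (f : ('I_m -> C) -> C) :=
  exists P : mpoly C m, forall x, mpeval P x = f x.

Lemma eq_mpeval (P : mpoly C m) x y : x =1 y -> mpeval P x = mpeval P y.
Proof.
by move=> exy; apply: eq_bigr => t _; congr (_ * _); apply: eq_bigr => i _; rewrite exy.
Qed.

Lemma poly_fun_cst c : poly_fun (fun _ => c).
Proof.
exists [:: (c, fun _ => 0%N)] => x; rewrite /mpeval big_seq1 /=.
by rewrite big1 ?mulr1 // => i _; rewrite expr0.
Qed.

Lemma poly_fun_var k : poly_fun (fun x => x k).
Proof.
exists [:: (1, fun i => nat_of_bool (i == k))] => x.
rewrite /mpeval big_seq1 /= mul1r (bigD1 k) //= eqxx expr1.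
by rewrite big1 ?mulr1 // => i /negbTE ->; rewrite expr0.
Qed.

Lemma poly_funD f g : poly_fun f -> poly_fun g -> poly_fun (fun x => f x + g x).
Proof.
by move=> [P hP] [Q hQ]; exists (P ++ Q) => x; rewrite /mpeval big_cat -!/(mpeval _ _) hP hQ.
Qed.

Lemma poly_funM f g : poly_fun f -> poly_fun g -> poly_fun (fun x => f x * g x).
Proof.
move=> [P hP] [Q hQ].
exists [seq (a.1 * b.1, fun i => (a.2 i + b.2 i)%N) | a <- P, b <- Q] => x.
rewrite -hP -hQ /mpeval big_allpairs_dep /= mulr_suml; apply: eq_bigr => a _.
rewrite mulr_sumr; apply: eq_bigr => b _ /=.
rewrite (eq_bigr (fun i => x i ^+ a.2 i * x i ^+ b.2 i)) => [|i _]; last by rewrite exprD.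
by rewrite big_split /=; ring.
Qed.

Inductive poly_fun_par : (C -> ('I_m -> C) -> C) -> Prop :=
| PolyFunParCoef f : poly_fun f -> poly_fun_par (fun _ x => f x)
| PolyFunParVar : poly_fun_par (fun T _ => T)
| PolyFunParD g h : poly_fun_par g -> poly_fun_par h ->
    poly_fun_par (fun T x => g T x + h T x)
| PolyFunParM g h : poly_fun_par g -> poly_fun_par h ->
    poly_fun_par (fun T x => g T x * h T x)
| PolyFunParExt g h : poly_fun_par g -> (forall T x, g T x = h T x) -> poly_fun_par h.

Lemma poly_fun_par_eval g T : poly_fun_par g -> poly_fun (g T).
Proof.
elim=> {g} [//| |g h _ Pg _ Ph|g h _ Pg _ Ph|g h _ [P hP] egh].
- exact: poly_fun_cst.
- exact: poly_funD.
- exact: poly_funM.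
- by exists P => x; rewrite hP egh.
Qed.

Lemma poly_fun_par_cst c : poly_fun_par (fun _ _ => c).
Proof. exact: (PolyFunParCoef (poly_fun_cst c)). Qed.

Lemma poly_fun_par_var k : poly_fun_par (fun _ x => x k).
Proof. exact: (PolyFunParCoef (poly_fun_var k)). Qed.

(* Splitting [g] into its even and odd parts in [t], with [t ^+ 2 = x k]. *)
Lemma poly_fun_par_shift k g : poly_fun_par g -> exists a b,
  [/\ poly_fun_par a, poly_fun_par b &
    forall x t T, t ^+ 2 = x k ->
      g (T + t) x = a T x + t * b T x /\ g (T - t) x = a T x - t * b T x].
Proof.
elim=> {g} [f Pf| |g h _ [a1 [b1 [Pa1 Pb1 e1]]] _ [a2 [b2 [Pa2 Pb2 e2]]]
  |g h _ [a1 [b1 [Pa1 Pb1 e1]]] _ [a2 [b2 [Pa2 Pb2 e2]]]|g h _ [a [b [Pa Pb e]]] egh].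
- exists (fun _ x => f x), (fun _ _ => 0); split; [exact: PolyFunParCoef|exact: poly_fun_par_cst|].
  by move=> x t T _; rewrite mulr0 addr0 subr0.
- exists (fun T _ => T), (fun _ _ => 1); split; [exact: PolyFunParVar|exact: poly_fun_par_cst|].
  by move=> x t T _; rewrite mulr1.
- exists (fun T x => a1 T x + a2 T x), (fun T x => b1 T x + b2 T x).
  split; [exact: PolyFunParD|exact: PolyFunParD|].
  move=> x t T ht; have [-> ->] := e1 x t T ht; have [-> ->] := e2 x t T ht.
  by split; ring.
- exists (fun T x => a1 T x * a2 T x + x k * (b1 T x * b2 T x)),
         (fun T x => a1 T x * b2 T x + b1 T x * a2 T x).
  split.
  + apply: PolyFunParD; first exact: PolyFunParM.
    by apply: PolyFunParM; [exact: poly_fun_par_var|exact: PolyFunParM].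
  + by apply: PolyFunParD; apply: PolyFunParM.
  + move=> x t T ht; have [-> ->] := e1 x t T ht; have [-> ->] := e2 x t T ht.
    by rewrite -ht; split; ring.
- exists a, b; split=> // x t T ht; rewrite -!egh; exact: e.
Qed.

(* [sign_prod T [:: t_1; ...; t_n]] is the product of [T +- t_1 +- ... +- t_n]
   over all 2^n choices of signs. *)
Fixpoint sign_prod (T : C) (ts : seq C) : C :=
  if ts is t :: ts' then sign_prod (T + t) ts' * sign_prod (T - t) ts' else T.

Lemma poly_fun_par_sign_prod (ks : seq 'I_m) : exists g, poly_fun_par g /\
  forall x ts T, all2 (fun t k => t ^+ 2 == x k) ts ks -> g T x = sign_prod T ts.
Proof.
elim: ks => [|k ks [g [Pg eg]]].
  by exists (fun T _ => T); split=> [|x [|t ts] T]; first exact: PolyFunParVar.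
have [a [b [Pa Pb e]]] := poly_fun_par_shift k Pg.
exists (fun T x => a T x * a T x - x k * (b T x * b T x)); split.
  apply: PolyFunParD; first exact: PolyFunParM.
  apply: (@PolyFunParExt (fun T x => (-1) * (x k * (b T x * b T x)))) => [|T x]; last by ring.
  apply: PolyFunParM; first exact: poly_fun_par_cst.
  by apply: PolyFunParM; [exact: poly_fun_par_var|exact: PolyFunParM].
move=> x [//|t ts] T /= /andP[/eqP ht hts].
rewrite -(eg x ts (T + t) hts) -(eg x ts (T - t) hts).
by have [-> ->] := e x t T ht; rewrite -ht; ring.
Qed.

Lemma sign_prod_eq0 ts T : T + \sum_(t <- ts) t = 0 -> sign_prod T ts = 0.
Proof.
elim: ts T => [|t ts IH] T /=; first by rewrite big_nil addr0.
by rewrite big_cons => hT; rewrite IH ?mul0r // -addrA.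
Qed.

(* Every factor is an odd integer. *)
Lemma sign_prod_bool_neq0 (bs : seq bool) (T : C) (z : int) :
  T + (count id bs)%:R = (2 * z + 1)%:~R ->
  sign_prod T [seq (nat_of_bool b)%:R | b <- bs] != 0.
Proof.
elim: bs T z => [|b bs IH] T z /=.
  by rewrite addr0 => ->; rewrite intr_eq0; apply/eqP; lia.
move=> hT; apply: mulf_neq0; first by apply: (IH _ z); rewrite -hT natrD; ring.
apply: (IH _ (z - b%:Z)).
rewrite (_ : 2 * (z - b%:Z) + 1 = 2 * z + 1 - 2 * b%:Z); last by ring.
rewrite intrB intrM -hT natrD.
have -> : (2 : int)%:~R = 2 :> C by [].
have -> : (b%:Z)%:~R = (nat_of_bool b)%:R :> C by [].
by ring.
Qed.

End PolynomialFunctions.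

Section Edges.
Variables (V : finType) (m : nat) (G : ordgraph V m).

Definition edge_cut (Y : {set V}) : {set 'I_m} :=
  [set k | ((edge G k).1 \in Y) != ((edge G k).2 \in Y)].

Definition star (v : V) : {set 'I_m} := [set k | v \in edge_set G k].

Definition links (k : 'I_m) (x y : V) : bool :=
  (edge G k == (x, y)) || (edge G k == (y, x)).

Lemma adj_sym : symmetric (adj G).
Proof. by move=> x y; apply/existsP/existsP => -[k hk]; exists k; rewrite orbC. Qed.

Lemma edge_links k : links k (edge G k).1 (edge G k).2.
Proof. by rewrite /links -surjective_pairing eqxx. Qed.

Lemma star_links k x : k \in star x -> exists y, links k x y.
Proof.
rewrite !inE => /orP[] /eqP ->; first by exists (edge G k).2; exact: edge_links.
by exists (edge G k).1; rewrite /links orbC; exact: edge_links.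
Qed.

Lemma links_neq k x y : links k x y -> x != y.
Proof. by case/orP => /eqP e; have := edge_loopless G k; rewrite e // eq_sym. Qed.

Lemma links_edge_set k x y : links k x y -> edge_set G k = [set x; y].
Proof. by rewrite /edge_set; case/orP => /eqP -> //=; rewrite setUC. Qed.

Lemma links_star k x y v : links k x y -> (k \in star v) = ((v == x) || (v == y)).
Proof. by move=> hk; rewrite inE (links_edge_set hk) !inE. Qed.

Lemma links_edge_cut k x y Y :
  links k x y -> (k \in edge_cut Y) = ((x \in Y) != (y \in Y)).
Proof. by rewrite inE; case/orP => /eqP -> //=; rewrite eq_sym. Qed.

Lemma star_edge_cut v : star v = edge_cut [set v].
Proof.
apply/setP => k; rewrite (links_star _ (edge_links k)) (links_edge_cut _ (edge_links k)).
have := links_neq (edge_links k); rewrite !inE ![_ == v]eq_sym.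
by case: (v =P _) => [<-|_]; case: (v =P _).
Qed.

Lemma edge_cutC X : edge_cut (~: X) = edge_cut X.
Proof. by apply/setP => k; rewrite !inE; case: (_ \in X); case: (_ \in X). Qed.

Lemma edge_cutI_uncut k Z X : k \notin edge_cut X ->
  (k \in edge_cut (Z :&: X)) = ((edge G k).1 \in X) && (k \in edge_cut Z).
Proof. by rewrite !inE negbK => /eqP ->; case: (_ \in X); rewrite ?andbT ?andbF. Qed.

Lemma adj_minus_links S x y : adj_minus G S x y ->
  [/\ x \notin S, y \notin S & exists k, links k x y].
Proof. by case/and3P => /existsP hk hx hy. Qed.

End Edges.

Definition cuts_sub (VG VH : finType) (m : nat) (G : ordgraph VG m)
    (H : ordgraph VH m) : Prop :=
  forall Y : {set VG}, exists X : {set VH}, edge_cut G Y = edge_cut H X.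

Section Walks.
Local Open Scope ring_scope.
Variables (C : numClosedFieldType) (V : finType) (m : nat) (G : ordgraph V m).

Fixpoint walk (u w : V) (ks : seq 'I_m) : bool :=
  if ks is k :: ks' then
    ((edge G k).1 == u) && walk (edge G k).2 w ks'
    || ((edge G k).2 == u) && walk (edge G k).1 w ks'
  else u == w.

Lemma walk_cat u v w ks1 ks2 : walk u v ks1 -> walk v w ks2 -> walk u w (ks1 ++ ks2).
Proof.
elim: ks1 u => [|k ks IH] u /=; first by move=> /eqP ->.
by case/orP => /andP[-> h] h2; rewrite (IH _ h h2) ?orbT.
Qed.

Lemma walk_rev u w ks : walk u w ks -> walk w u (rev ks).
Proof.
elim: ks u => [|k ks IH] u; first by rewrite /= eq_sym.
rewrite rev_cons -cats1 /=.
by case/orP => /andP[/eqP <- h]; apply: walk_cat (IH _ h) _; rewrite /= !eqxx ?orbT.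
Qed.

Lemma walk_of_connect x y : connect (adj G) x y -> exists ks, walk x y ks.
Proof.
case/connectP => p; elim: p x => [|z p IH] x /=.
  by move=> _ ->; exists [::]; rewrite /= eqxx.
case/andP => /existsP[k hk] hp hy; have [ks hks] := IH z hp hy.
by exists (k :: ks) => /=; case/orP: hk => /eqP -> /=; rewrite eqxx hks ?orbT.
Qed.

Lemma walk_meas u w ks (p : V -> C) : walk u w ks -> exists ts,
  all2 (fun t k => t ^+ 2 == meas G p k) ts ks /\ \sum_(t <- ts) t = p u - p w.
Proof.
elim: ks u => [|k ks IH] u /=; first by move=> /eqP ->; exists [::]; rewrite big_nil subrr.
case/orP => /andP[/eqP e /IH[ts [hts hsum]]].
- exists ((p u - p (edge G k).2) :: ts); rewrite /= hts big_cons hsum /meas e andbT.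
  by split; [apply/eqP|]; ring.
- exists ((p u - p (edge G k).1) :: ts); rewrite /= hts big_cons hsum /meas e andbT.
  by split; [apply/eqP|]; ring.
Qed.

Definition indicator (D : {set 'I_m}) : 'I_m -> C := fun k => (nat_of_bool (k \in D))%:R.

Lemma M1_indicator_edge_cut Y : M1 G (indicator (edge_cut G Y)).
Proof.
move=> P hP; pose p v : C := (nat_of_bool (v \in Y))%:R.
rewrite (@eq_mpeval _ _ P _ (meas G p)); first by apply: hP; exists p.
move=> k; rewrite /indicator /meas /p inE.
by case: (_ \in Y); case: (_ \in Y); rewrite /= ?subrr ?expr0n ?sub0r ?subr0 ?sqrrN ?expr1n.
Qed.

(* The polynomial [sign_prod 0 (sqrt x_k1, ..., sqrt x_kn)] of the walk vanishes on
   the image of [meas G], as one choice of signs telescopes to [p r - p r]. *)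
Lemma M1_indicator_walk_even (D : {set 'I_m}) : M1 G (indicator D) ->
  forall r ks, walk r r ks -> ~~ odd (count (mem D) ks).
Proof.
move=> hM r ks hw; apply/negP => hodd.
have [g [Pg eg]] := poly_fun_par_sign_prod C ks.
have [P hP] := poly_fun_par_eval 0 Pg.
have : mpeval P (indicator D) = 0.
  apply: hM => _ [p ->]; rewrite hP.
  have [ts [hts hsum]] := walk_meas p hw.
  by rewrite (eg _ ts) // sign_prod_eq0 // hsum subrr add0r.
rewrite hP (eg _ [seq (nat_of_bool b)%:R | b <- [seq k \in D | k <- ks]]).
  apply/eqP; apply: (sign_prod_bool_neq0 (z := (count (mem D) ks)./2%:Z)).
  rewrite add0r count_map -{1}(odd_double_half (count (mem D) ks)) hodd.
  set n := (count (mem D) ks)./2.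
  rewrite intrD intrM natrD -muln2 natrM.
  have -> : (2 : int)%:~R = 2 :> C by [].
  have -> : (n%:Z)%:~R = n%:R :> C by [].
  by rewrite /= -/(1 : C); ring.
clear; elim: ks => //= k ks ->; rewrite andbT /indicator.
by case: (k \in D); rewrite /= ?expr1n ?expr0n.
Qed.

Lemma even_walks_edge_cut (D : {set 'I_m}) :
  (forall r ks, walk r r ks -> ~~ odd (count (mem D) ks)) ->
  exists X : {set V}, D = edge_cut G X.
Proof.
move=> hev; have csym : connect_sym (adj G) := sym_connect_sym (adj_sym G).
have /fin_all_exists[path_to hpath] x : exists ks, walk (fingraph.root (adj G) x) x ks.
  by apply: walk_of_connect; rewrite csym fingraph.connect_root.
exists [set x | odd (count (mem D) (path_to x))]; apply/setP => k; rewrite !inE.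
set a := (edge G k).1; set b := (edge G k).2.
have rab : fingraph.root (adj G) a = fingraph.root (adj G) b.
  by apply/fingraph.rootP/connect1/existsP => //; exists k; exact: edge_links.
have : walk (fingraph.root (adj G) a) (fingraph.root (adj G) a)
    (path_to a ++ [:: k] ++ rev (path_to b)).
  apply: walk_cat (hpath a) _; apply: (@walk_cat _ b); first by rewrite /= !eqxx.
  by rewrite rab; exact: walk_rev.
move/hev; rewrite !count_cat count_rev !oddD /=.
by case: (k \in D); case: (odd (count _ (path_to a))); case: (odd (count _ (path_to b))).
Qed.

End Walks.

Lemma M1_cuts_sub (C : numClosedFieldType) (VG VH : finType) (m : nat)
    (G : ordgraph VG m) (H : ordgraph VH m) :
  (forall x : 'I_m -> C, M1 G x -> M1 H x) -> cuts_sub G H.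
Proof.
move=> hM Y; apply: even_walks_edge_cut; apply: (@M1_indicator_walk_even C).
exact/hM/M1_indicator_edge_cut.
Qed.

Lemma exists_third (T : finType) (a b : T) : 3 <= #|T| -> exists c, (c != a) && (c != b).
Proof.
move=> hT; have /set0Pn[c] : ~: [set a; b] != set0.
  rewrite -card_gt0; have := cardsC [set a; b]; have := cards2 a b; lia.
by rewrite !inE negb_or; exists c.
Qed.

Lemma connect_neq_step (T : finType) (e : rel T) x y :
  x != y -> connect e x y -> exists z, e x z.
Proof.
move=> nxy /connectP[[|z p] hp hy]; first by rewrite hy eqxx in nxy.
by exists z; case/andP: hp.
Qed.

Lemma path_meet (T : eqType) (e : rel T) (P Q : pred T) x p :
  path e x p -> P x -> Q (last x p) ->
  (forall a b, e a b -> (P a && P b) || (Q a && Q b)) -> exists z, P z && Q z.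
Proof.
move=> + + + he; elim: p x => [|y p IH] x /=; first by exists x; apply/andP.
case/andP => exy hp Px Ql; case/orP: (he _ _ exy) => /andP[Pa Pb]; first exact: IH hp Pb Ql.
by exists x; rewrite Px Pa.
Qed.

Section ThreeConnected.
Variables (V : finType) (m : nat) (G : ordgraph V m).
Hypotheses (G3 : three_connected G) (V3 : 3 <= #|V|).

Lemma star_nonempty v : exists k, k \in star G v.
Proof.
have [c /andP[ncv _]] := exists_third v v V3.
have hc : connected_minus G set0 by apply: G3; rewrite cards0.
have nvc : v != c by rewrite eq_sym.
have [z /adj_minus_links[_ _ [k hk]]] :=
  connect_neq_step nvc (hc v c (negbT (in_set0 v)) (negbT (in_set0 c))).
by exists k; rewrite (links_star _ hk) eqxx.
Qed.

Lemma private_edge a b : a != b -> exists k, (k \in star G a) && (k \notin star G b).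
Proof.
move=> nab; have [c /andP[nca ncb]] := exists_third a b V3.
have hc : connected_minus G [set b] by apply: G3; rewrite cards1.
have nac : a != c by rewrite eq_sym.
have [ha hc'] : a \notin [set b] /\ c \notin [set b] by rewrite !inE.
have [z /adj_minus_links[_ hz [k hk]]] := connect_neq_step nac (hc a c ha hc').
rewrite inE in hz; exists k.
by rewrite !(links_star _ hk) eqxx negb_or ![b == _]eq_sym nab hz.
Qed.

(* Since [G - v] is connected, [Y] is constant off [v]. *)
Lemma edge_cut_sub_star v (Y : {set V}) :
  edge_cut G Y \subset star G v -> edge_cut G Y != set0 -> edge_cut G Y = star G v.
Proof.
move=> hsub /set0Pn[k0 hk0].
have [o hk0o] := star_links (subsetP hsub _ hk0).
have hvo : (v \in Y) != (o \in Y) by rewrite -(links_edge_cut _ hk0o).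
have closedY : closed (adj_minus G [set v]) (mem Y).
  move=> x y /adj_minus_links[hx hy [k hk]]; rewrite !inE in hx hy.
  have : k \notin star G v by rewrite (links_star _ hk) negb_or ![v == _]eq_sym hx hy.
  by move/(contra (subsetP hsub k)); rewrite (links_edge_cut _ hk) negbK => /eqP.
have hconst x : v != x -> (x \in Y) = (o \in Y).
  move=> nvx; apply: (closed_connect closedY); apply: G3; rewrite ?cards1 ?inE ?(eq_sym x) //.
  by rewrite eq_sym (links_neq hk0o).
apply/setP => k; have := edge_links G k; move: (edge G k).1 (edge G k).2 => a b hk.
rewrite (links_edge_cut _ hk) (links_star _ hk); have nab := links_neq hk.
have [eva|nva] := eqVneq v a; first by rewrite -eva (hconst b) ?hvo // eva.
have [evb|nvb] := eqVneq v b; first by rewrite -evb orbT (hconst a nva) eq_sym hvo.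
by rewrite (hconst a nva) (hconst b nvb) eqxx.
Qed.

(* Follow a path of [G - v] from an edge of one colour to an edge of the other. *)
Lemma two_colours_meet v (c : pred 'I_m) kA kB :
  kA \notin star G v -> kB \notin star G v -> c kA -> ~~ c kB ->
  exists u kA' kB', [/\ kA' \in star G u, kA' \notin star G v & c kA'] /\
                    [/\ kB' \in star G u, kB' \notin star G v & ~~ c kB'].
Proof.
move=> kAv kBv ckA ckB.
pose touches (b : bool) x := [exists k, [&& k \notin star G v, c k == b & k \in star G x]].
suff [u /andP[/existsP[kA' /and3P[? /eqP ? ?]] /existsP[kB' /and3P[? /eqP ckB' ?]]]] :
    exists u, touches true u && touches false u.
  by exists u, kA', kB'; split; split=> //; rewrite ckB'.
have hc : connected_minus G [set v] by apply: G3; rewrite cards1.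
have hA := edge_links G kA; have hB := edge_links G kB.
have /connectP[p hp hlast] : connect (adj_minus G [set v]) (edge G kA).1 (edge G kB).1.
  apply: hc; rewrite inE.
  - by apply: (contraNneq _ kAv) => <-; rewrite (links_star _ hA) eqxx.
  - by apply: (contraNneq _ kBv) => <-; rewrite (links_star _ hB) eqxx.
apply: (path_meet hp).
- by apply/existsP; exists kA; rewrite kAv ckA (links_star _ hA) !eqxx.
- by rewrite -hlast; apply/existsP; exists kB; rewrite kBv (negbTE ckB) (links_star _ hB) !eqxx.
move=> x y /adj_minus_links[hx hy [k hk]]; rewrite !inE in hx hy.
have kv : k \notin star G v by rewrite (links_star _ hk) negb_or ![v == _]eq_sym hx hy.
have [hxk hyk] : k \in star G x /\ k \in star G y by rewrite !(links_star _ hk) !eqxx orbT.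
have touch z : k \in star G z -> touches (c k) z.
  by move=> hzk; apply/existsP; exists k; rewrite kv eqxx hzk.
by case: (c k) (touch x hxk) (touch y hyk) => -> ->; rewrite ?orbT.
Qed.

End ThreeConnected.

Section StarMatching.
Variables (VG VH : finType) (m : nat) (G : ordgraph VG m) (H : ordgraph VH m).
Hypotheses (G3 : three_connected G) (VG3 : 3 <= #|VG|).
Hypotheses (cutsGH : cuts_sub G H) (cutsHG : cuts_sub H G).

(* An endpoint [w] in [X] of an edge at [v] has its star inside [star G v], and that
   star is a nonempty cut of [G]. *)
Lemma star_cut_star v (X : {set VH}) : star G v = edge_cut H X ->
  (forall k, k \notin star G v -> (edge H k).1 \notin X) ->
  exists w, star H w = star G v.
Proof.
move=> hX hout; have [k0 hk0] := star_nonempty G3 VG3 v.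
have [w [hwX hk0w]] : exists w, w \in X /\ k0 \in star H w.
  have hk := edge_links H k0; move: hk0; rewrite hX (links_edge_cut _ hk).
  have [x1X _|_ /= /negPn x2X] := boolP ((edge H k0).1 \in X).
  - by exists (edge H k0).1; rewrite (links_star _ hk) eqxx.
  - by exists (edge H k0).2; rewrite (links_star _ hk) eqxx orbT.
exists w; have [Y hY] := cutsHG [set w]; rewrite star_edge_cut hY.
apply: edge_cut_sub_star => //; last by apply/set0Pn; exists k0; rewrite -hY -star_edge_cut.
apply/subsetP => k; rewrite -hY -star_edge_cut => /star_links[y hk].
apply: contraT => kv; have := hout _ kv; move: kv; rewrite hX (links_edge_cut _ hk) negbK.
by case/orP: hk => /eqP -> /= /eqP eqwy; rewrite -?eqwy hwX.
Qed.

(* If edges of [G - v] had [H]-endpoints on both sides of [X], some vertex [u]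
   would meet both kinds; with [star G u = edge_cut H Z], the cut of [H] at
   [Z :&: X] is a cut of [G] that splits the connected graph [G - {u, v}]. *)
Lemma star_cut_one_sided v (X : {set VH}) kA kB : star G v = edge_cut H X ->
  kA \notin star G v -> kB \notin star G v ->
  (edge H kA).1 \in X -> (edge H kB).1 \notin X -> False.
Proof.
move=> hX kAv kBv kAX kBX.
have [u [kA' [kB' [[kAu kAv' kAX'] [kBu kBv' kBX']]]]] :=
  two_colours_meet G3 (c := fun k => (edge H k).1 \in X) kAv kBv kAX kBX.
have [Z hZ] := cutsGH [set u]; rewrite -star_edge_cut in hZ.
have [Y hY] := cutsHG (Z :&: X).
have cutY k : k \notin star G v ->
    (k \in edge_cut G Y) = ((edge H k).1 \in X) && (k \in star G u).
  by move=> kv; rewrite -hY edge_cutI_uncut -?hX ?hZ.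
have [a hka] := star_links kAu.
have [b hkb] := star_links kBu.
have off_uv z k : links G k u z -> k \notin star G v -> z \notin [set u; v].
  move=> hk kv; rewrite !inE negb_or eq_sym (links_neq hk) /=.
  by apply: contraNneq kv => <-; rewrite (links_star _ hk) eqxx orbT.
have closedY : closed (adj_minus G [set u; v]) (mem Y).
  move=> x y /adj_minus_links[+ + [k hk]]; rewrite !inE !negb_or => /andP[xu xv] /andP[yu yv].
  have [kv ku] : k \notin star G v /\ k \notin star G u.
    by rewrite !(links_star _ hk) !negb_or !(eq_sym v) !(eq_sym u) xu xv yu yv.
  by apply/eqP/negbFE; rewrite -(links_edge_cut _ hk) cutY // (negbTE ku) andbF.
have hab : (a \in Y) = (b \in Y).
  apply: (closed_connect closedY); apply: G3; first by rewrite cards2; case: (_ != _).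
  - exact: off_uv hka kAv'.
  - exact: off_uv hkb kBv'.
have := cutY _ kAv'; rewrite (links_edge_cut _ hka) kAX' kAu.
have := cutY _ kBv'; rewrite (links_edge_cut _ hkb) (negbTE kBX') hab.
by move=> /negbFE/eqP ->; rewrite eqxx.
Qed.

Lemma exists_star_eq v : exists w, star H w = star G v.
Proof.
have [X hX] := cutsGH [set v]; rewrite -star_edge_cut in hX.
have [kA /andP[kAv kAX] | noA] :=
  pickP [pred k | (k \notin star G v) && ((edge H k).1 \in X)]; last first.
  by apply: (star_cut_star hX) => k kv; move: (noA k); rewrite /= kv => /negbT.
have [kB /andP[kBv kBX] | noB] :=
  pickP [pred k | (k \notin star G v) && ((edge H k).1 \notin X)]; last first.
  apply: (@star_cut_star _ (~: X)); first by rewrite edge_cutC.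
  by move=> k kv; move: (noB k); rewrite /= kv inE => /negbT.
by case: (star_cut_one_sided hX kAv kBv kAX kBX).
Qed.

End StarMatching.

Section StarMap.
Variables (VG VH : finType) (m : nat) (G : ordgraph VG m) (H : ordgraph VH m).
Hypotheses (G3 : three_connected G) (VG3 : 3 <= #|VG|).
Variable sigma : VG -> VH.
Hypothesis star_sigma : forall v, star H (sigma v) = star G v.

Lemma star_map_inj : injective sigma.
Proof.
move=> a b eab; apply/eqP; apply: contraT => nab.
have [k /andP[] ] := private_edge G3 VG3 nab.
by rewrite -!star_sigma eab => ->.
Qed.

Lemma star_map_edge_set k :
  edge_set H k = [set sigma (edge G k).1; sigma (edge G k).2].
Proof.
have sigma_in z : k \in star G z -> sigma z \in edge_set H k by rewrite -star_sigma inE.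
have hG := edge_links G k.
have [s1 s2] : sigma (edge G k).1 \in edge_set H k /\ sigma (edge G k).2 \in edge_set H k.
  by split; apply: sigma_in; rewrite (links_star _ hG) eqxx ?orbT.
have : sigma (edge G k).1 != sigma (edge G k).2.
  by rewrite (inj_eq star_map_inj) (edge_loopless G k).
move: s1 s2; rewrite (links_edge_set (edge_links H k)) !inE.
by do 2 case/orP=> /eqP ->; rewrite ?eqxx // setUC.
Qed.

Lemma star_map_bij : no_isolated H -> bijective sigma.
Proof.
move=> noiso; apply: inj_card_bij star_map_inj _.
rewrite -(card_codom star_map_inj) -cardsT subset_leq_card //.
apply/subsetP => w _; have [k] := noiso w; rewrite star_map_edge_set !inE.
by case/orP => /eqP ->; exact: codom_f.
Qed.

End StarMap.

Theorem mainTheorem5 (C : numClosedFieldType) (VG VH : finType) (m : nat)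
  (G : ordgraph VG m) (H : ordgraph VH m) :
  (3 <= #|VG|)%N -> (3 <= #|VH|)%N ->
  three_connected G -> no_isolated H ->
  (forall x : 'I_m -> C, M1 G x <-> M1 H x) ->
  exists sigma : VG -> VH, bijective sigma /\
    forall k : 'I_m,
      edge_set H k = [set sigma (edge G k).1; sigma (edge G k).2].
Proof.
move=> VG3 _ G3 noiso eqM.
have cutsGH : cuts_sub G H by apply: (@M1_cuts_sub C) => x /eqM.
have cutsHG : cuts_sub H G by apply: (@M1_cuts_sub C) => x /(iffRL (eqM x)).
have [sigma star_sigma] : exists sigma : VG -> VH, forall v, star H (sigma v) = star G v.
  exact: fin_all_exists (exists_star_eq G3 VG3 cutsGH cutsHG).
exists sigma; split.
  exact (star_map_bij G3 VG3 star_sigma noiso).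
exact (star_map_edge_set G3 VG3 star_sigma).
Qed.
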